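(* For every integer $k$ with $7\le k\le 17$, the Tuza constant satisfies $c_k \ge \dfrac{3}{2k+6}$.
   Context: A hypergraph $H=(V,E)$ consists of a finite vertex set $V$ and a finite collection $E$ of subsets of $V$ (edges). $H$ is $k$-uniform if every edge has exactly $k$ vertices. A transversal of $H$ is a set $T\subseteq V$ meeting every edge; $\tau(H)$ denotes the minimum size of a transversal. For $k\ge 1$, the Tuza constant is $c_k=\sup_{H} \tau(H)/(m+n)$, where the supremum ranges over all $k$-uniform hypergraphs $H$, with $n=|V|$ and $m=|E|$. *)

From HB Require Import structures.
From mathcomp Require Import all_boot all_order all_algebra.
From mathcomp Require Import all_classical all_reals.
Set Implicit Arguments. Unset Strict Implicit. Unset Printing Implicit Defensive.
Import Order.TTheory GRing.Theory Num.Theory.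
Local Open Scope ring_scope.

Definition uniform (k : nat) (V : finType) (E : {set {set V}}) : Prop :=
  forall e, e \in E -> #|e| = k.

Definition transversal (V : finType) (E : {set {set V}}) (T : {set V}) : bool :=
  [forall e in E, [exists x in e, x \in T]].

(* tau(H): minimum size of a transversal (the default #|V| is only reached
   when no transversal exists, which cannot happen when all edges are
   nonempty, and is otherwise an upper bound for any transversal size). *)
Definition tau (V : finType) (E : {set {set V}}) : nat :=
  \big[minn/#|V|]_(T : {set V} | transversal E T) #|T|.

Definition tuza_const (R : realType) (k : nat) : R :=
  sup [set x : R | exists (V : finType) (E : {set {set V}}),
        uniform k E /\ x = (tau E)%:R / (#|E| + #|V|)%:R].

(* Label the 2k vertices by triples from a fixed family of pairwise intersecting
   triples on six points, with multiplicities chosen so that every point is missed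
   by exactly k of them, and take as edges, for each point j, the k vertices whose
   label misses j.  Any two vertices share a point j of their labels, so the edge
   of j avoids both: a transversal cannot be covered by two vertices, whence
   tau >= 3 while m + n <= 6 + 2k.  Writing k = 2a + 3b, this works for every k >= 2. *)

From Pilot Require Import Defs.
From HB Require Import structures.
From mathcomp Require Import all_boot all_order all_algebra.
From mathcomp Require Import all_classical all_reals.
From mathcomp Require Import zify.
Import Order.TTheory GRing.Theory Num.Theory.
Set Implicit Arguments. Unset Strict Implicit. Unset Printing Implicit Defensive.
Local Open Scope ring_scope.

Lemma tau_le_card (V : finType) (E : {set {set V}}) : (tau E <= #|V|)%N.
Proof.
rewrite /tau; elim/big_ind: _ => // [x y hx _|T _]; last exact: max_card.
by rewrite geq_min hx.
Qed.

Lemma leq_tau (V : finType) (E : {set {set V}}) (m : nat) :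
  (m <= #|V|)%N -> (forall T, Defs.transversal E T -> m <= #|T|)%N -> (m <= tau E)%N.
Proof.
move=> mV mT; rewrite /tau; elim/big_ind: _ => // x y hx hy.
by rewrite leq_min hx.
Qed.

Lemma tuza_ratio_le1 (R : realType) (V : finType) (E : {set {set V}}) :
  (tau E)%:R / (#|E| + #|V|)%:R <= (1 : R).
Proof.
have [->|mn_gt0] := posnP (#|E| + #|V|); first by rewrite invr0 mulr0.
rewrite ler_pdivrMr ?ltr0n // mul1r ler_nat.
exact: leq_trans (tau_le_card E) (leq_addl _ _).
Qed.

Lemma tuza_const_ge (R : realType) (k : nat) (V : finType) (E : {set {set V}}) :
  uniform k E -> (tau E)%:R / (#|E| + #|V|)%:R <= tuza_const R k.
Proof.
move=> Ek; apply: ub_le_sup; last by exists V, E.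
by exists 1 => _ [V' [E' [_ ->]]]; exact: tuza_ratio_le1.
Qed.

Section StarComplements.

Variables (V I : finType) (lab : V -> {set I}).
Hypothesis lab_intersecting : forall x y, exists j, (j \in lab x) && (j \in lab y).

Definition star_complement (j : I) : {set V} := [set v | j \notin lab v].

Definition star_complements : {set {set V}} := [set star_complement j | j : I].

Lemma card_star_complements : (#|star_complements| <= #|I|)%N.
Proof. exact: leq_imset_card. Qed.

Lemma transversal_avoid2 T : Defs.transversal star_complements T ->
  forall x y, exists2 z, z \in T & (z != x) && (z != y).
Proof.
move=> /forallP T_meets x y; have [j /andP [jx jy]] := lab_intersecting x y.
have /implyP/(_ (imset_f _ (isT : j \in I)))/existsP := T_meets (star_complement j).
case => z /andP []; rewrite inE => jz zT.
by exists z => //; apply/andP; split; apply: contraNneq jz => ->.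
Qed.

Lemma transversal_card_ge3 (x : V) T : Defs.transversal star_complements T ->
  (3 <= #|T|)%N.
Proof.
move=> TE; have [y yT /andP [yx _]] := transversal_avoid2 TE x x.
have [z zT /andP [zx zy]] := transversal_avoid2 TE x y.
have [w wT /andP [wy wz]] := transversal_avoid2 TE y z.
rewrite (cardsD1 y) yT (cardsD1 z) !inE zy zT ltnS ltnS card_gt0.
by apply/set0Pn; exists w; rewrite !inE wz wy wT.
Qed.

Lemma tau_star_complements_ge3 : (3 <= #|V|)%N -> (3 <= tau star_complements)%N.
Proof.
move=> V3; have /card_gt0P [x _] : (0 < #|V|)%N by apply: leq_trans V3.
by apply: leq_tau => // T; apply: transversal_card_ge3.
Qed.

Lemma tuza_const_ge_star_complements (R : realType) (k : nat) :
  (forall j, #|star_complement j| = k) -> (3 <= #|V|)%N ->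
  3 / (#|V| + #|I|)%:R <= tuza_const R k.
Proof.
move=> card_star V3.
have E_unif : uniform k star_complements by move=> _ /imsetP [j _ ->].
apply: le_trans (tuza_const_ge R E_unif).
have mn_gt0 : (0 < #|star_complements| + #|V|)%N by rewrite addn_gt0 (leq_trans _ V3) ?orbT.
have tau3 := tau_star_complements_ge3 V3.
have mn_le : (#|star_complements| + #|V| <= #|V| + #|I|)%N.
  by rewrite addnC leq_add2l card_star_complements.
apply: ler_pM => //; first by rewrite invr_ge0.
  by rewrite -(ler_nat R 3) in tau3.
by rewrite lef_pV2 ?posrE ?ltr0n ?(leq_trans mn_gt0) ?ler_nat.
Qed.

End StarComplements.

Definition intersecting_triples : seq (seq nat) :=
  [:: [:: 0; 1; 4]; [:: 2; 3; 4]; [:: 1; 2; 5]; [:: 0; 3; 5];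
      [:: 0; 1; 2]; [:: 1; 3; 4]; [:: 0; 4; 5]].

Lemma intersecting_triplesP : {in intersecting_triples &,
  forall t u, has (fun j => (j \in t) && (j \in u)) (iota 0 6)}.
Proof. by apply/allrelP. Qed.

(* With these multiplicities every point of {0, ..., 5} lies outside exactly
   2a + 3b of the 4a + 6b triples. *)
Definition triple_family (a b : nat) : seq (seq nat) :=
  nseq a [:: 0; 1; 4] ++ nseq (a + b) [:: 2; 3; 4] ++ nseq (a + b) [:: 1; 2; 5]
  ++ nseq (a + b) [:: 0; 3; 5] ++ nseq b [:: 0; 1; 2] ++ nseq b [:: 1; 3; 4]
  ++ nseq b [:: 0; 4; 5].

Lemma size_triple_family a b : size (triple_family a b) = (2 * (2 * a + 3 * b))%N.
Proof. rewrite /triple_family !size_cat !size_nseq; lia. Qed.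

Lemma triple_family_sub a b : {subset triple_family a b <= intersecting_triples}.
Proof.
by apply/allP; rewrite /triple_family !all_cat !all_nseq /= !orbT.
Qed.

Lemma count_notin_triple_family a b j : (j < 6)%N ->
  count (fun t => j \notin t) (triple_family a b) = (2 * a + 3 * b)%N.
Proof.
rewrite /triple_family !count_cat !count_nseq.
by case: j => [|[|[|[|[|[|j]]]]]] //= _; lia.
Qed.

Lemma card_nth_pred (T : Type) (x0 : T) (s : seq T) (P : pred T) :
  #|[set i : 'I_(size s) | P (nth x0 s i)]| = count P s.
Proof.
rewrite -sum1_card (eq_bigl (fun i : 'I_(size s) => P (nth x0 s i))) => [|i].
  rewrite -(big_mkord (fun i => P (nth x0 s i)) (fun _ => 1%N)) sum1_count -count_map.
  by rewrite /index_iota subn0 map_nth_iota0 // take_size.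
by rewrite inE.
Qed.

Lemma tuza_const_ge_2a3b (R : realType) (a b k : nat) :
  k = (2 * a + 3 * b)%N -> (2 <= k)%N -> 3 / (2 * k%:R + 6) <= tuza_const R k.
Proof.
move=> k_eq k2; pose s := triple_family a b.
pose lab (x : 'I_(size s)) := [set j : 'I_6 | val j \in nth [::] s x].
have lab_intersecting x y : exists j, (j \in lab x) && (j \in lab y).
  have /hasP [j] := intersecting_triplesP
    (triple_family_sub (mem_nth [::] (ltn_ord x)))
    (triple_family_sub (mem_nth [::] (ltn_ord y))).
  by rewrite mem_iota => j6 jxy; exists (Ordinal j6); rewrite !inE.
have card_star j : #|star_complement lab j| = k.
  rewrite k_eq -(count_notin_triple_family a b (ltn_ord j)) -(card_nth_pred [::]).
  by apply: eq_card => x; rewrite !inE.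
have := tuza_const_ge_star_complements lab_intersecting R card_star.
rewrite !card_ord size_triple_family -k_eq natrD natrM; apply; lia.
Qed.

Lemma exists_2a3b (k : nat) : (2 <= k)%N -> exists a b, k = (2 * a + 3 * b)%N.
Proof.
move=> k2; have := odd_double_half k; rewrite -muln2.
by case: (odd k) => /= k_eq; [exists k./2.-1, 1 | exists k./2, 0]; lia.
Qed.

Lemma tuza_const_ge_2k6 (R : realType) (k : nat) :
  (2 <= k)%N -> 3 / (2 * k%:R + 6) <= tuza_const R k.
Proof. by move=> k2; have [a [b k_eq]] := exists_2a3b k2; apply: tuza_const_ge_2a3b k_eq k2. Qed.

Theorem theorem1 (R : realType) (k : nat) :
  (7 <= k <= 17)%N -> 3 / (2 * k%:R + 6) <= tuza_const R k.
Proof. by case/andP => k7 _; apply: tuza_const_ge_2k6; apply: leq_trans k7. Qed.
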